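(* Let $V$ be a $\mathbb{Z}$-graded vertex algebra such that $V=C_2(V)$, and let $W$ be an irreducible weak $V$-module. Then $W=\widetilde{C}_2(W)$.
   Context: A vertex algebra $(V,Y,\mathbf{1})$ has vertex operators $Y(v,z)=\sum_{n\in\mathbb{Z}}v_nz^{-n-1}$. A $\mathbb{Z}$-graded vertex algebra is a vertex algebra $V=\bigoplus_{n\in\mathbb{Z}}V_n$ with a conformal vector $\omega\in V_2$, $Y(\omega,z)=\sum_n L(n)z^{-n-2}$, whose modes satisfy the Virasoro relations with some central charge, such that $L(0)v=nv$ for $v\in V_n$ and $Y(L(-1)v,z)=\frac{d}{dz}Y(v,z)$. A weak $V$-module is a vector space $M$ with $Y_M(v,z)=\sum_n v_nz^{-n-1}\in(\mathrm{End}\,M)[[z,z^{-1}]]$ such that $u_nw=0$ for $n\gg0$, $Y_M(\mathbf{1},z)=\mathrm{id}_M$, and the Jacobi identity holds; it is irreducible if it has no weak submodules other than $0$ and itself. Define $C_2(V)=\mathrm{Span}_{\mathbb{C}}\{u_{-2}v\mid u,v\in V\}$ and, for a weak $V$-module $M$, $\widetilde{C}_2(M)=\mathrm{Span}_{\mathbb{C}}\{u_{-2}w\mid u\in V,\ w\in M\}$. $V$ (resp. $M$) is called $C_2$-cofinite if $V/C_2(V)$ (resp. $M/\widetilde{C}_2(M)$) is finite-dimensional. *)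

From HB Require Import structures.
From mathcomp Require Import all_boot all_order all_algebra.
Set Implicit Arguments. Unset Strict Implicit. Unset Printing Implicit Defensive.
Import Order.TTheory GRing.Theory Num.Theory.
Local Open Scope ring_scope.

Section VOA.
Variable K : numClosedFieldType.  (* stands for the complex numbers *)

Definition binz (m : int) (i : nat) : K :=
  (\prod_(j < i) (m - (j : nat)%:Z)%:~R) / (i`!)%:R.

Definition is_subspace (W : lmodType K) (P : W -> Prop) : Prop :=
  P 0 /\ (forall (a : K) x y, P x -> P y -> P (a *: x + y)).

Variables (V : lmodType K).

(* modes u_n acting on a space M: (act u n w) = u_n w *)
Definition mode_linear (M : lmodType K) (act : V -> int -> M -> M) : Prop :=
  (forall n (a : K) u u' w, act (a *: u + u') n w = a *: act u n w + act u' n w) /\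
  (forall n (a : K) u w w', act u n (a *: w + w') = a *: act u n w + act u n w').

Definition truncation (M : lmodType K) (act : V -> int -> M -> M) : Prop :=
  forall u w, exists N : int, forall n : int, N <= n -> act u n w = 0.

(* Jacobi identity in component (Borcherds) form; the formally infinite sums
   over i >= 0 are computed up to any N beyond which all terms vanish. *)
Definition jacobi (Y : V -> int -> V -> V) (M : lmodType K)
    (act : V -> int -> M -> M) : Prop :=
  forall (u v : V) (w : M) (l m n : int) (N : nat),
    (forall i : nat, (N <= i)%N ->
        [/\ Y u (l + i%:Z) v = 0, act v (n + i%:Z) w = 0 & act u (m + i%:Z) w = 0]) ->
    \sum_(i < N) binz m i *: act (Y u (l + (i : nat)%:Z) v) (m + n - (i : nat)%:Z) w =
    \sum_(i < N) ((-1) ^+ (i : nat) * binz l i) *: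
        (act u (l + m - (i : nat)%:Z) (act v (n + (i : nat)%:Z) w)
         - (-1) ^+ (absz l) *: act v (l + n - (i : nat)%:Z) (act u (m + (i : nat)%:Z) w)).

Definition is_vertex_algebra (Y : V -> int -> V -> V) (one : V) : Prop :=
  [/\ mode_linear Y, truncation Y,
      (forall n w, Y one n w = if n == -1 then w else 0),
      (forall v, Y v (-1) one = v /\ forall n : int, 0 <= n -> Y v n one = 0)
    & jacobi Y Y].

Definition is_Z_grading (Vg : int -> V -> Prop) : Prop :=
  [/\ (forall n, is_subspace (Vg n)),
      (forall v, exists (s : seq int) (f : int -> V),
          [/\ uniq s, (forall k, Vg k (f k)) & v = \sum_(k <- s) f k])
    & (forall (s : seq int) (f : int -> V), uniq s ->
          (forall k, k \in s -> Vg k (f k)) -> \sum_(k <- s) f k = 0 ->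
          forall k, k \in s -> f k = 0)].

Definition is_Z_graded_VA (Y : V -> int -> V -> V) (one : V)
    (Vg : int -> V -> Prop) (omega : V) : Prop :=
  let L := fun n : int => Y omega (n + 1) in
  [/\ is_vertex_algebra Y one /\ is_Z_grading Vg, Vg 2 omega,
      (exists c : K, forall (m n : int) (x : V),
          L m (L n x) - L n (L m x) =
          (m - n)%:~R *: L (m + n) x
          + (if m + n == 0 then ((m ^+ 3 - m)%:~R / 12%:R) * c else 0) *: x),
      (forall (n : int) v, Vg n v -> L 0 v = n%:~R *: v)
    & (forall v (n : int) w, Y (L (-1) v) n w = - (n%:~R) *: Y v (n - 1) w)].

Definition in_C2 (Y : V -> int -> V -> V) (x : V) : Prop :=
  exists s : seq (K * V * V), x = \sum_(t <- s) t.1.1 *: Y t.1.2 (-2) t.2.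

Definition is_weak_module (Y : V -> int -> V -> V) (one : V)
    (M : lmodType K) (YM : V -> int -> M -> M) : Prop :=
  [/\ mode_linear YM, truncation YM,
      (forall n w, YM one n w = if n == -1 then w else 0)
    & jacobi Y YM].

Definition is_weak_submodule (M : lmodType K) (YM : V -> int -> M -> M)
    (P : M -> Prop) : Prop :=
  is_subspace P /\ (forall u n w, P w -> P (YM u n w)).

Definition irreducible_module (M : lmodType K) (YM : V -> int -> M -> M) : Prop :=
  forall P : M -> Prop, is_weak_submodule YM P ->
    (forall w, P w -> w = 0) \/ (forall w, P w).

Definition in_C2_mod (M : lmodType K) (YM : V -> int -> M -> M) (x : M) : Prop :=
  exists s : seq (K * V * M), x = \sum_(t <- s) t.1.1 *: YM t.1.2 (-2) t.2.

End VOA.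

From HB Require Import structures.
From mathcomp Require Import all_boot all_order all_algebra.
Set Implicit Arguments. Unset Strict Implicit. Unset Printing Implicit Defensive.
Import Order.TTheory GRing.Theory Num.Theory.
Local Open Scope ring_scope.

(* The argument only uses that M is a weak module over a vertex
   algebra with V = C_2(V).  Since V = C_2(V), the vacuum is a finite combination
   1 = sum a (u_{-2} v), hence w = 1_{-1} w = sum a (u_{-2} v)_{-1} w.
   1. C~_2(M) is a subspace of M (closed under 0, +, scaling, finite sums).
   2. Translation covariance on M: (v_{-2} 1)_p w = -p v_{p-1} w, obtained
      from the Jacobi identity with vacuum; by induction on n it follows that
      every mode u_{-n} w with n >= 2 lies in C~_2(M).
   3. The Jacobi identity with l = -2, m = 0, n = -1 expands (u_{-2} v)_{-1} w
      as a finite combination of u_{-2-i} v_{-1+i} w and v_{-3-i} u_i w, all of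
      which are modes of index <= -2, hence lie in C~_2(M) by step 2.
   The theorem follows by linearity of the vertex operator in its first
   argument. *)

Section SpanC2.
Variables (K : numClosedFieldType) (V M : lmodType K) (YM : V -> int -> M -> M).

Lemma C2mod0 : in_C2_mod YM 0.
Proof. by exists [::]; rewrite big_nil. Qed.

Lemma C2modD x y : in_C2_mod YM x -> in_C2_mod YM y -> in_C2_mod YM (x + y).
Proof. by move=> [s1 ->] [s2 ->]; exists (s1 ++ s2); rewrite big_cat. Qed.

Lemma C2modZ (a : K) x : in_C2_mod YM x -> in_C2_mod YM (a *: x).
Proof.
move=> [s ->]; exists [seq (a * t.1.1, t.1.2, t.2) | t <- s].
by rewrite big_map scaler_sumr; apply: eq_bigr => t _; rewrite scalerA.
Qed.

Lemma C2modB x y : in_C2_mod YM x -> in_C2_mod YM y -> in_C2_mod YM (x - y).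
Proof. by move=> hx hy; apply: C2modD hx _; rewrite -scaleN1r; apply: C2modZ. Qed.

Lemma C2mod_sum (I : Type) (r : seq I) (F : I -> M) :
  (forall i, in_C2_mod YM (F i)) -> in_C2_mod YM (\sum_(i <- r) F i).
Proof.
move=> h; elim: r => [|i r IH]; first by rewrite big_nil; apply: C2mod0.
by rewrite big_cons; apply: C2modD.
Qed.

Lemma C2mod_gen u x : in_C2_mod YM (YM u (-2) x).
Proof. by exists [:: (1, u, x)]; rewrite big_seq1 scale1r. Qed.

End SpanC2.

Section ModeAlgebra.
Variables (K : numClosedFieldType) (V W : lmodType K) (act : V -> int -> W -> W).
Hypothesis act_lin : mode_linear act.

Lemma mode0l n w : act 0 n w = 0.
Proof.
have := (proj1 act_lin) n 1 0 0 w; rewrite !scale1r addr0 => e.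
by apply: (addrI (act 0 n w)); rewrite addr0 -e.
Qed.

Lemma mode0r u n : act u n 0 = 0.
Proof.
have := (proj2 act_lin) n 1 u 0 0; rewrite !scale1r addr0 => e.
by apply: (addrI (act u n 0)); rewrite addr0 -e.
Qed.

Lemma mode_suml (I : Type) (s : seq I) (c : I -> K) (f : I -> V) n w :
  act (\sum_(t <- s) c t *: f t) n w = \sum_(t <- s) c t *: act (f t) n w.
Proof.
elim: s => [|t s IH]; first by rewrite !big_nil mode0l.
by rewrite !big_cons (proj1 act_lin) IH.
Qed.

End ModeAlgebra.

Section Binomial.
Variable K : numClosedFieldType.

Lemma binz0 m : binz K m 0 = 1.
Proof. by rewrite /binz big_ord0 fact0 divr1. Qed.

Lemma binz1 m : binz K m 1 = m%:~R.
Proof. by rewrite /binz big_ord1 /= subr0 divr1. Qed.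

Lemma binz0S i : binz K 0 i.+1 = 0.
Proof. by rewrite /binz big_ord_recl /= subrr !mul0r. Qed.

End Binomial.

Lemma shift_bound (N n : int) :
  exists k : nat, forall i : nat, (k <= i)%N -> N <= n + i%:Z.
Proof.
exists `|N - n|%N => i hi; rewrite -lerBlDl; apply: le_trans (ler_norm _) _.
by rewrite -abszE lez_nat.
Qed.

Section WeakModule.
Variables (K : numClosedFieldType) (V M : lmodType K)
  (Y : V -> int -> V -> V) (one : V) (YM : V -> int -> M -> M).
Hypothesis Ytr : truncation Y.
Hypothesis Ycreation : forall v, Y v (-1) one = v /\ forall n : int, 0 <= n -> Y v n one = 0.
Hypothesis Mlin : mode_linear YM.
Hypothesis Mtr : truncation YM.
Hypothesis Mvacuum : forall n w, YM one n w = if n == -1 then w else 0.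
Hypothesis Mjac : jacobi Y YM.

(* Truncation makes every instance of the Jacobi identity a finite sum:
   beyond some N, at least any prescribed N0, all three families vanish. *)
Lemma jacobi_window u v w (l m n : int) (N0 : nat) :
  exists2 N : nat, (N0 <= N)%N & forall i : nat, (N <= i)%N ->
    [/\ Y u (l + i%:Z) v = 0, YM v (n + i%:Z) w = 0 & YM u (m + i%:Z) w = 0].
Proof.
have [N1 H1] := Ytr u v; have [N2 H2] := Mtr v w; have [N3 H3] := Mtr u w.
have [k1 K1] := shift_bound N1 l; have [k2 K2] := shift_bound N2 n.
have [k3 K3] := shift_bound N3 m.
exists (maxn N0 (maxn k1 (maxn k2 k3))); first exact: leq_maxl.
move=> i; rewrite !geq_max => /and4P [_ a b c].
by split; [apply: H1; apply: K1 | apply: H2; apply: K2 | apply: H3; apply: K3].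
Qed.

(* Translation covariance: (v_{-2} 1)_p w = -p v_{p-1} w, i.e. Y(L(-1)v, z)
   acts on M as the derivative of Y(v, z). *)
Lemma translation_mode v (p : int) w :
  YM (Y v (-2) one) p w = - p%:~R *: YM v (p - 1) w.
Proof.
have vac k x : k != -1 -> YM one k x = 0 by move=> /negbTE hk; rewrite Mvacuum hk.
have [N N2 HN] := jacobi_window v one w (-2) (p + 1) (-1) 2.
(* Only i = 0, 1 survive on the left, since v_{i-2} 1 = 0 for i >= 2, and
   only i = 0 on the right, since 1_k = 0 unless k = -1. *)
have := Mjac HN; rewrite -(subnKC N2) !big_ord_recl /= !big1; first last.
- by move=> i _; rewrite (proj2 (Ycreation v)) // (mode0l Mlin) scaler0.
- move=> i _; rewrite !vac ?(mode0r Mlin) ?scaler0 ?subrr ?scaler0 //.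
rewrite (_ : bump 0 0 = 1%N) // !addr0 Mvacuum eqxx !vac // (mode0r Mlin).
rewrite !scaler0 !subr0 !scaler0 ?addr0 expr0 mul1r !binz0 binz1 !scale1r.
rewrite (_ : -2 + 1%:Z = -1) // (proj1 (Ycreation v)) addrK.
rewrite (_ : -2 + (p + 1) = p - 1); last by rewrite addrC -addrA.
move/(canRL (addrK _)) => ->.
by rewrite intrD scalerDl scale1r opprD addrCA subrr addr0 scaleNr.
Qed.

(* Every mode u_{-n} x with n >= 2 lies in C~_2(M): by translation covariance
   u_{-n-1} x = n^{-1} (u_{-2} 1)_{-n} x. *)
Lemma C2mod_negative_mode (n : int) u x : n <= -2 -> in_C2_mod YM (YM u n x).
Proof.
have step k : in_C2_mod YM (YM u (- (k.+2)%:Z) x).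
  elim: k u => [|k IH] u; first exact: C2mod_gen.
  have D := translation_mode u (- (k.+2)%:Z) x.
  rewrite -opprD -PoszD addn1 opprK pmulrn in D.
  have nz : (k.+2)%:R != 0 :> K by rewrite pnatr_eq0.
  have -> : YM u (- (k.+3)%:Z) x =
            (k.+2)%:R^-1 *: YM (Y u (-2) one) (- (k.+2)%:Z) x.
    by rewrite D scalerA mulVf // scale1r.
  exact/C2modZ/IH.
case: n => [n|[|n] _] //; by have := step n; rewrite NegzE.
Qed.

(* The Jacobi identity with l = -2, m = 0, n = -1 writes (u_{-2} v)_{-1} w as a
   combination of modes of index <= -2. *)
Lemma C2mod_vacuum_term u v w : in_C2_mod YM (YM (Y u (-2) v) (-1) w).
Proof.
have [[|N] // _ HN] := jacobi_window u v w (-2) 0 (-1) 1.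
(* binz 0 i = 0 for i > 0, so the left side reduces to its i = 0 term *)
have := Mjac HN; rewrite big_ord_recl big1 => [|i _]; last first.
  by rewrite lift0 binz0S scale0r.
rewrite /= binz0 scale1r !addr0 add0r => ->.
apply: C2mod_sum => i; apply/C2modZ/C2modB; last apply: C2modZ;
  apply: C2mod_negative_mode; by case: (nat_of_ord i).
Qed.

End WeakModule.

Theorem proposition2p13 (K : numClosedFieldType) (V : lmodType K)
    (Y : V -> int -> V -> V) (one : V) (Vg : int -> V -> Prop) (omega : V)
    (HV : is_Z_graded_VA Y one Vg omega)
    (HC2 : forall x : V, in_C2 Y x)
    (M : lmodType K) (YM : V -> int -> M -> M)
    (HM : is_weak_module Y one YM)
    (Hirr : irreducible_module YM) :
  forall w : M, in_C2_mod YM w.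
Proof.
case: HV => [[[_ Ytr _ Ycreation _] _] _ _ _ _].
case: HM => [Mlin Mtr Mvacuum Mjac] w.
have -> : w = YM one (-1) w by rewrite Mvacuum eqxx.
have [s ->] := HC2 one.
rewrite (mode_suml Mlin); apply: C2mod_sum => t; apply: C2modZ.
exact: C2mod_vacuum_term.
Qed.
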